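(* Let $A, B \in\mathbb{C}^{n\times n}$ be matrices of index at most $1$. Then $A\leq^{1GD}B$ if and only if $A\,\#\!\leq B$, where $A\,\#\!\leq B$ (left sharp partial order) means $A^2=AB$ and $R(A)\subseteq R(B)$.
   Context: For $A\in\mathbb{C}^{n\times n}$, $ind(A)$ is the smallest nonnegative integer $k$ with $\mathrm{rank}(A^k)=\mathrm{rank}(A^{k+1})$. $A\{1\}$ is the set of matrices $X$ with $AXA=A$. With $k=ind(A)$, $A\{GD\}$ is the set of matrices $X$ with $AXA=A$, $XA^{k+1}=A^k$, $A^{k+1}X=A^k$ (G-Drazin inverses). A 1GD inverse of $A$ is a matrix $A^{1GD}=A^{-}AA^{GD}$ with $A^-\in A\{1\}$, $A^{GD}\in A\{GD\}$. We write $A\leq^{1GD}B$ if $AA^{1GD}=BA^{1GD}$ and $A^{1GD}A=A^{1GD}B$ for some 1GD inverse $A^{1GD}$ of $A$. $R(\cdot)$ denotes range. *)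

From HB Require Import structures.
From mathcomp Require Import all_boot all_order all_algebra.
From mathcomp Require Import complex.
From mathcomp Require Import Rstruct.
Set Implicit Arguments. Unset Strict Implicit. Unset Printing Implicit Defensive.
Import GRing.Theory.
Local Open Scope ring_scope.

Definition C : fieldType := complex.complex Rdefinitions.R.

Fixpoint mxpow (n : nat) (A : 'M[C]_n) (k : nat) : 'M[C]_n :=
  match k with 0 => 1%:M | k'.+1 => A *m mxpow A k' end.

Definition is_ind (n : nat) (A : 'M[C]_n) (k : nat) : Prop :=
  \rank (mxpow A k) = \rank (mxpow A k.+1) /\
  (forall j, (j < k)%N -> \rank (mxpow A j) <> \rank (mxpow A j.+1)).

Definition ind_le1 (n : nat) (A : 'M[C]_n) : Prop :=
  exists k, is_ind A k /\ (k <= 1)%N.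

Definition inner_inv (n : nat) (A X : 'M[C]_n) : Prop := A *m X *m A = A.

Definition gd_inv (n : nat) (A X : 'M[C]_n) : Prop :=
  exists k, is_ind A k /\
    A *m X *m A = A /\
    X *m mxpow A k.+1 = mxpow A k /\
    mxpow A k.+1 *m X = mxpow A k.

Definition inv_1GD (n : nat) (A Y : 'M[C]_n) : Prop :=
  exists A1 AGD, inner_inv A A1 /\ gd_inv A AGD /\ Y = A1 *m A *m AGD.

Definition le_1GD (n : nat) (A B : 'M[C]_n) : Prop :=
  exists Y, inv_1GD A Y /\ A *m Y = B *m Y /\ Y *m A = Y *m B.

(* R(A) \subseteq R(B) for the ranges (column spaces); mathcomp's (_ <= _)%MS
   compares row spaces, so we transpose. *)
Definition range_sub (n : nat) (A B : 'M[C]_n) : bool := (A^T <= B^T)%MS.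

Definition left_sharp_le (n : nat) (A B : 'M[C]_n) : Prop :=
  A *m A = A *m B /\ range_sub A B.

From mathcomp Require Import all_boot all_algebra.
Set Implicit Arguments. Unset Strict Implicit. Unset Printing Implicit Defensive.
Import GRing.Theory.
Local Open Scope ring_scope.

(* For ind(A) <= 1 the G-Drazin inverses of A are exactly the inner inverses
   X commuting with A, and one exists because rank(A^2) = rank(A) lets A be
   written both as Z A^2 and as A^2 W.  With such an X, multiplying the 1GD
   equations by A on the appropriate side gives A = A X B (hence A^2 = AB)
   and A = B A^- A (hence R(A) <= R(B)).  Conversely, if A^2 = AB and A = BW,
   then A^- := X + (I - XA) W X is an inner inverse of A with B A^- A = A,
   and A^- A X is the required 1GD inverse. *)

Section CommutingInnerInverse.

Variables (R : pzRingType) (n : nat) (A X : 'M[R]_n).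
Hypotheses (AXA : A *m X *m A = A) (AX_XA : A *m X = X *m A).

Lemma left_sharp_of_1GD_eqs (A1 B : 'M[R]_n) :
  A *m A1 *m A = A ->
  A *m (A1 *m A *m X) = B *m (A1 *m A *m X) ->
  (A1 *m A *m X) *m A = (A1 *m A *m X) *m B ->
  A *m A = A *m B /\ A = B *m A1 *m A.
Proof.
move=> AA1A AY_BY YA_YB.
have A_AXB : A = A *m X *m B.
  have := congr1 (mulmx A) YA_YB.
  by rewrite !mulmxA AA1A AXA.
split.
  by rewrite {2}A_AXB !mulmxA -(mulmxA A A X) AX_XA mulmxA AXA.
have := congr1 (mulmx^~ A) AY_BY.
by rewrite /= !mulmxA AA1A AXA -!mulmxA (mulmxA A X) AXA !mulmxA.
Qed.

Lemma exists_1GD_eqs_of_left_sharp (B W : 'M[R]_n) :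
  A *m A = A *m B -> A = B *m W ->
  exists A1, [/\ A *m A1 *m A = A,
    A *m (A1 *m A *m X) = B *m (A1 *m A *m X) &
    (A1 *m A *m X) *m A = (A1 *m A *m X) *m B].
Proof.
move=> AAB A_BW.
have XAXA : X *m A *m X *m A = X *m A by rewrite -!mulmxA (mulmxA A) AXA.
have AAW : A *m A *m W = A *m A by rewrite {1}AAB -mulmxA -A_BW.
have XAXA_XXAA : X *m A *m X *m A = X *m X *m A *m A.
  by rewrite -(mulmxA X A X) AX_XA !mulmxA.
have XAW : X *m A *m W = X *m A.
  rewrite -{1}XAXA XAXA_XXAA -!mulmxA (mulmxA A A W) AAW.
  by rewrite !mulmxA -XAXA_XXAA XAXA.
have AXB : A *m X *m B = A.
  by rewrite AX_XA -mulmxA -AAB mulmxA -AX_XA AXA.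
pose A1 := X + (1%:M - X *m A) *m W *m X.
have AA1A : A *m A1 *m A = A.
  by rewrite mulmxDr mulmxDl AXA !mulmxA mulmxBr mulmx1 mulmxA AXA subrr
             !mul0mx addr0.
have BA1A : B *m A1 *m A = A.
  rewrite mulmxDr mulmxDl !mulmxA mulmxBr mulmx1 !mulmxBl !mulmxA -A_BW AXA.
  rewrite -(mulmxA B X A) -(mulmxA B (X *m A) W) XAW mulmxA.
  by rewrite -!mulmxA (mulmxA A X A) AXA addrC subrK.
exists A1; split => //; first by rewrite !mulmxA AA1A BA1A.
by rewrite -!mulmxA (mulmxA A X A) (mulmxA A X B) AXA AXB.
Qed.

End CommutingInnerInverse.

Lemma mxrank_sqr_lfactor (F : fieldType) (n : nat) (A : 'M[F]_n) :
  \rank (A *m A) = \rank A -> exists Z, A = Z *m A *m A.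
Proof.
move=> rkAA.
have /submxP [Z A_ZAA] : (A <= A *m A)%MS.
  by rewrite -(mxrank_leqif_sup (submxMl A A)).2 rkAA.
by exists Z; rewrite -mulmxA.
Qed.

Lemma commuting_inner_inv_exists (F : fieldType) (n : nat) (A : 'M[F]_n) :
  \rank (A *m A) = \rank A ->
  exists X, A *m X *m A = A /\ A *m X = X *m A.
Proof.
move=> rkAA.
have [Z A_ZAA] := mxrank_sqr_lfactor rkAA.
have [W' AT_W'ATAT] : exists W', A^T = W' *m A^T *m A^T.
  by apply: mxrank_sqr_lfactor; rewrite -trmx_mul !mxrank_tr.
have A_AAW : A = A *m A *m W'^T.
  by rewrite -[A]trmxK {1}AT_W'ATAT !trmx_mul !trmxK mulmxA.
set W := W'^T in A_AAW.
have ZA_AW : Z *m A = A *m W by rewrite {1}A_AAW !mulmxA -A_ZAA.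
have AZA : A *m Z *m A = A by rewrite -mulmxA ZA_AW mulmxA -A_AAW.
have AWA : A *m W *m A = A by rewrite -ZA_AW -A_ZAA.
exists (Z *m A *m W); split; first by rewrite !mulmxA AZA AWA.
by rewrite !mulmxA AZA -ZA_AW -!mulmxA (mulmxA A W A) AWA.
Qed.

Section IndexAtMostOne.

Variable n : nat.
Implicit Types A B X : 'M[C]_n.

Lemma is_ind0_unitmx A : is_ind A 0 -> A \in unitmx.
Proof.
case=> /= rk1 _.
by rewrite -(row_full_unit A) /row_full -(mulmx1 A) -rk1 mxrank1.
Qed.

Lemma is_ind_le1 A k : ind_le1 A -> is_ind A k -> (k <= 1)%N.
Proof.
case=> j [[rkj _] j_le1] [_ min_k].
rewrite leqNgt; apply/negP => k_gt1.
by apply: (min_k j) rkj; apply: leq_ltn_trans k_gt1.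
Qed.

Lemma ind_le1_mxrank_sqr A : ind_le1 A -> \rank (A *m A) = \rank A.
Proof.
case=> k [indA]; case: k indA => [|[|//]] indA _.
  by rewrite mxrankMfree // row_free_unit is_ind0_unitmx.
by case: indA => /=; rewrite !mulmx1.
Qed.

Lemma unit_inner_invE A X : A \in unitmx -> A *m X *m A = A -> X = invmx A.
Proof.
move=> Aunit AXA.
by rewrite -[X](mulKmx Aunit) -[A *m X](mulmxK Aunit) AXA mulmxV ?mulmx1.
Qed.

Lemma gd_inv_ind_le1P A : ind_le1 A ->
  forall X, gd_inv A X <-> A *m X *m A = A /\ A *m X = X *m A.
Proof.
move=> indA X; split.
  case=> k [indAk [AXA [XAk AkX]]]; split => //.
  have k_le1 := is_ind_le1 indA indAk.
  case: k k_le1 indAk XAk AkX => [|[|//]] _ /=.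
    move=> /is_ind0_unitmx Aunit _ _.
    by rewrite (unit_inner_invE Aunit AXA) mulmxV ?mulVmx.
  rewrite !mulmx1 => _ XAA AAX.
  have -> : A *m X = X *m A *m A *m X by rewrite -{1}XAA !mulmxA.
  by rewrite -{3}AAX !mulmxA.
case=> AXA AX_XA; case: indA => k [indAk k_le1].
exists k; split=> //; split=> //.
case: k k_le1 indAk => [|[|//]] _ /=.
  move=> /is_ind0_unitmx Aunit; rewrite (unit_inner_invE Aunit AXA) !mulmx1.
  by rewrite mulmxV ?mulVmx.
rewrite !mulmx1; split; first by rewrite mulmxA -AX_XA AXA.
by rewrite -mulmxA AX_XA mulmxA AXA.
Qed.

Lemma range_subP A B : reflect (exists W, A = B *m W) (range_sub A B).
Proof.
apply: (iffP submxP) => [[D AT_DBT] | [W ->]].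
  by exists D^T; rewrite -[A]trmxK AT_DBT trmx_mul trmxK.
by exists W^T; rewrite trmx_mul.
Qed.

End IndexAtMostOne.

Theorem theorem3p14 (n : nat) (A B : 'M[C]_n) :
  ind_le1 A -> ind_le1 B -> (le_1GD A B <-> left_sharp_le A B).
Proof.
move=> indA _; split.
  case=> _ [[A1 [X [AA1A [gdX ->]]]] [AY_BY YA_YB]].
  have [AXA AX_XA] := (gd_inv_ind_le1P indA X).1 gdX.
  have [AAB A_BA1A] := left_sharp_of_1GD_eqs AXA AX_XA AA1A AY_BY YA_YB.
  by split=> //; apply/range_subP; exists (A1 *m A); rewrite mulmxA.
case=> AAB /range_subP [W A_BW].
have [X [AXA AX_XA]] := commuting_inner_inv_exists (ind_le1_mxrank_sqr indA).
have [A1 [AA1A AY_BY YA_YB]] := exists_1GD_eqs_of_left_sharp AXA AX_XA AAB A_BW.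
have gdX : gd_inv A X by apply/(gd_inv_ind_le1P indA X).
by exists (A1 *m A *m X); split=> //; exists A1, X.
Qed.
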